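(* Assume (A1)–(A4) below, and let $\varepsilon_\diamond$, $\alpha$, $\mathcal{E}_n$ be as below. Let $\tilde\Omega$ be the set of $\omega\in\Omega$ for which there exists $n_\omega\in\mathbb{N}_+$ with $\omega\in\mathcal{E}_n$ for all $n>n_\omega$. Let $\mathbf{a}_\star$ be the unique solution of $\mathrm{VI}(\mathbb{A},\mathbb{F})$. For any $\omega\in\tilde\Omega$ and any neighborhood $\mathcal{N}$ of $\mathbf{a}_\star$, there exists $N_\omega\in\mathbb{N}_+$ such that for all $n\ge N_\omega$ the unique solution $\mathbf{a}_{\omega,n}$ of $\mathrm{VI}(A_{\omega,n},\mathbf{F}_{\omega,n})$ satisfies $\mathbf{a}_{\omega,n}\in\mathcal{N}$. In particular $\lim_{n\to\infty}\|\mathbf{a}_{\omega,n}-\mathbf{a}_\star\|_2=0$.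
   Context: Setting. $(\Omega,\mathcal{F},\mathbb{P})$ is a probability space; $N,d\in\mathbb{N}_+$, $R>0$, $\lambda>0$. $\mathcal{X}\subseteq\mathbb{R}^{n_x}$, $\mathcal{Y}\subseteq\mathbb{R}^{n_y}$ are compact; $X:\Omega\to\mathcal{X}$, $Y:\Omega\to\mathcal{Y}$ are random variables. $\phi_1,\dots,\phi_d$ are continuous on $\mathcal{X}$, $\Phi^d(x)=[\phi_l(x)]_{l=1}^d$. $\mathbb{B}_R=\{a\in\mathbb{R}^d:\|a\|_2<R\}$, $\operatorname{cl}\mathbb{B}_R$ its closure, $\operatorname{cl}\mathbb{B}_R^N=\prod_{i=1}^N\operatorname{cl}\mathbb{B}_R\subseteq\mathbb{R}^{Nd}$. A profile $\mathbf{a}=[a^1;\dots;a^N]$, $a^i\in\mathbb{R}^d$, defines $\hat z^i(x)=\sum_l a^i_l\phi_l(x)$ and $\hat z^{-i}(x)$ (stack over $j\neq i$). $\hat{\mathcal{Z}}^i=\bigcup\{\hat z^i(\mathcal{X}):a^i\in\operatorname{cl}\mathbb{B}_R\}$, $\hat{\mathcal{Z}}=\prod_i\hat{\mathcal{Z}}^i$. Player $i$ has objective $J^i(z^i;y,z^{-i})$ (derivative $\partial J^i$ in $z^i$) and constraint $h^i:\hat{\mathcal{Z}}^i\times\mathcal{Y}\to\mathbb{R}$. $F(z;y)=[\partial J^i(z^i;y,z^{-i})]_i$; $\mathbf{F}(\mathbf{a};x,y)=[\partial J^i(\hat z^i(x);y,\hat z^{-i}(x))\Phi^d(x)]_i\in\mathbb{R}^{Nd}$;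 $\mathbb{F}^0(\mathbf{a})=\mathbb{E}[\mathbf{F}(\mathbf{a};X,Y)]$, $\mathbb{F}(\mathbf{a})=\mathbb{F}^0(\mathbf{a})+\lambda\mathbf{a}$; $\mathbf{h}^i(a^i;x,y)=h^i(\hat z^i(x);y)$; $\bar h^i(a^i)=\mathbb{E}[\mathbf{h}^i(a^i;X,Y)]$. $(X^k,Y^k)_{k\ge1}$ are i.i.d. copies of $(X,Y)$ on $\Omega$; $\mathbf{F}_{\omega,n}(\mathbf{a})=\frac1n\sum_{k=1}^n\mathbf{F}(\mathbf{a};X^k(\omega),Y^k(\omega))+\lambda\mathbf{a}$, $\mathbf{h}^i_{\omega,n}(a^i)=\frac1n\sum_{k=1}^n\mathbf{h}^i(a^i;X^k(\omega),Y^k(\omega))$. For $\varepsilon\in\mathbb{R}$: $\mathbb{A}^i_\varepsilon=\{a^i\in\operatorname{cl}\mathbb{B}_R:\bar h^i(a^i)\le\varepsilon\}$, $\mathbb{A}_\varepsilon=\prod_i\mathbb{A}^i_\varepsilon$, $\mathbb{A}=\mathbb{A}_0$; $A^i_{\omega,n}=\{a^i\in\operatorname{cl}\mathbb{B}_R:\mathbf{h}^i_{\omega,n}(a^i)\le0\}$, $A_{\omega,n}=\prod_iA^i_{\omega,n}$. For a closed convex set $K\subseteq\mathbb{R}^{Nd}$ and $G:\mathbb{R}^{Nd}\to\mathbb{R}^{Nd}$, $\mathrm{VI}(K,G)$ asks for $\mathbf{a}^*\in K$ with $\langle G(\mathbf{a}^* ),\mathbf{a}-\mathbf{a}^*\rangle\ge0$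 for all $\mathbf{a}\in K$. (A1) Each $J^i(\cdot;y,z^{-i})$ is continuously differentiable. (A2) For all $y$, $F(\cdot;y)$ is $L_F$-Lipschitz on $\hat{\mathcal{Z}}$ and each $h^i(\cdot;y)$ is $L_h$-Lipschitz on $\hat{\mathcal{Z}}^i$; some $z\in\hat{\mathcal{Z}}$ has $F(z;\mathcal{Y})$ and all $h^i(z^i;\mathcal{Y})$ bounded. (A3) For every $y$, $F(\cdot;y)$ is monotone on $\hat{\mathcal{Z}}$ ($\langle F(z_1;y)-F(z_2;y),z_1-z_2\rangle\ge0$) and each $h^i(\cdot;y)$ is convex on $\hat{\mathcal{Z}}^i$. (A4) There is $\varepsilon_h>0$ with $\{a^i\in\operatorname{cl}\mathbb{B}_R:\bar h^i(a^i)\le-\varepsilon_h\}\ne\varnothing$ for every $i$. The constant $\varepsilon_\diamond\in(0,\varepsilon_h)$: for every $\mathbf{a}\in\operatorname{cl}\mathbb{B}_R^N$, each centered random variable $W$ of the form $[\mathbf{F}(\mathbf{a};X,Y)]_l-[\mathbb{F}^0(\mathbf{a})]_l$ or $\mathbf{h}^i(a^i;X,Y)-\bar h^i(a^i)$, with variance $\sigma^2$, has rate function $I(u)=\sup_t\{tu-\log\mathbb{E}[e^{tW}]\}$ satisfying $I(u)\ge u^2/(3\sigma^2)$ for $0<u\le\varepsilon_\diamond$. Fix $0<\alpha<1/2$, $\varepsilon_n=\varepsilon_\diamond n^{-\alpha}$, and $\mathcal{E}_n=\{\omega:\|\mathbf{F}_{\omega,n}(\mathbf{a})-\mathbb{F}(\mathbf{a})\|_2<\varepsilon_n\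 \forall\mathbf{a}\in\operatorname{cl}\mathbb{B}_R^N\}\cap\{\omega:\mathbb{A}_{-\varepsilon_n}\subseteq A_{\omega,n}\subseteq\mathbb{A}_{\varepsilon_n}\}$. *)

From HB Require Import structures.
From mathcomp Require Import all_boot all_order all_algebra.
From mathcomp Require Import all_classical all_reals all_analysis.
Set Implicit Arguments. Unset Strict Implicit. Unset Printing Implicit Defensive.
Import Order.TTheory GRing.Theory Num.Theory.
Import numFieldNormedType.Exports.
Local Open Scope classical_set_scope.
Local Open Scope ring_scope.

Section Defs.
Variable R : realType.

Definition norm2 m n (A : 'M[R]_(m, n)) : R :=
  Num.sqrt (\sum_i \sum_j A i j ^+ 2).
Definition inner m n (A B : 'M[R]_(m, n)) : R :=
  \sum_i \sum_j A i j * B i j.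

Definition clBall d (Rr : R) (ai : 'rV[R]_d) : Prop := norm2 ai <= Rr.
Definition clBallN N d (Rr : R) (a : 'M[R]_(N, d)) : Prop :=
  forall i, clBall Rr (row i a).

Definition zi nx d (phi : 'I_d -> 'rV[R]_nx -> R) (ai : 'rV[R]_d) x : R :=
  \sum_l ai 0 l * phi l x.
Definition zhat nx N d (phi : 'I_d -> 'rV[R]_nx -> R) (a : 'M[R]_(N, d)) x
  : 'rV[R]_N := \row_i zi phi (row i a) x.

Definition Zi nx d (phi : 'I_d -> 'rV[R]_nx -> R) (Xs : set 'rV[R]_nx)
  (Rr : R) : set R :=
  [set t | exists ai x, clBall Rr ai /\ Xs x /\ t = zi phi ai x].
Definition Zset nx N d (phi : 'I_d -> 'rV[R]_nx -> R) (Xs : set 'rV[R]_nx)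
  (Rr : R) : set 'rV[R]_N := [set z | forall i, Zi phi Xs Rr (z 0 i)].

Definition upd N (z : 'rV[R]_N) (i : 'I_N) (t : R) : 'rV[R]_N :=
  \row_j (if j == i then t else z 0 j).

Definition Fz N ny (dJ : 'I_N -> 'rV[R]_N -> 'rV[R]_ny -> R) z y : 'rV[R]_N :=
  \row_i dJ i z y.

Definition Fb nx ny N d (dJ : 'I_N -> 'rV[R]_N -> 'rV[R]_ny -> R)
  (phi : 'I_d -> 'rV[R]_nx -> R) (a : 'M[R]_(N, d)) x y : 'M[R]_(N, d) :=
  \matrix_(i, l) (dJ i (zhat phi a x) y * phi l x).

Definition hb nx ny N d (h : 'I_N -> R -> 'rV[R]_ny -> R)
  (phi : 'I_d -> 'rV[R]_nx -> R) i (ai : 'rV[R]_d) x y : R :=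
  h i (zi phi ai x) y.

Definition vecof T n (X : 'I_n -> T -> R) (w : T) : 'rV[R]_n := \row_j X j w.

Context {dO : measure_display} {Omega : measurableType dO}.
Variable P : probability Omega R.

Definition Ex (f : Omega -> R) : R := fine (\int[P]_w (f w)%:E).

(* variance of a centered random variable W *)
Definition sigma2c (W : Omega -> R) : R := Ex (fun w => W w ^+ 2).

Definition rate (W : Omega -> R) (u : R) : \bar R :=
  ereal_sup [set ((t * u) - ln (Ex (fun w => expR (t * W w))))%:E | t in [set: R]].

Definition gen_copy nx ny (Xk : 'I_nx -> Omega -> R) (Yk : 'I_ny -> Omega -> R)
  : set (set Omega) :=
  <<s [set A | (exists j (B : set R), measurable B /\ A = Xk j @^-1` B) \/
               (exists j (B : set R), measurable B /\ A = Yk j @^-1` B)] >>.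

Definition indep_copies nx ny (Xs : nat -> 'I_nx -> Omega -> R)
  (Ys : nat -> 'I_ny -> Omega -> R) : Prop :=
  forall (s : seq nat) (E : nat -> set Omega), uniq s ->
    (forall k, k \in s -> gen_copy (Xs k) (Ys k) (E k)) ->
    P (\bigcap_(k in [set k | k \in s]) E k) = (\prod_(k <- s) P (E k))%E.

(* (X',Y') has the same joint law as (X,Y) (equality on measurable rectangles,
   which generate the Borel sigma-algebra of R^(nx+ny)) *)
Definition same_law nx ny (X X' : 'I_nx -> Omega -> R) (Y Y' : 'I_ny -> Omega -> R)
  : Prop :=
  forall (Bx : 'I_nx -> set R) (By : 'I_ny -> set R),
    (forall j, measurable (Bx j)) -> (forall j, measurable (By j)) ->
    P ((\bigcap_j (X' j @^-1` Bx j)) `&` (\bigcap_j (Y' j @^-1` By j))) =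
    P ((\bigcap_j (X j @^-1` Bx j)) `&` (\bigcap_j (Y j @^-1` By j))).

End Defs.

Section Problem.
Variable R : realType.
Context {dO : measure_display} {Omega : measurableType dO}.
Variable P : probability Omega R.
Variables (nx ny N d : nat).
Variables (phi : 'I_d -> 'rV[R]_nx -> R) (dJ : 'I_N -> 'rV[R]_N -> 'rV[R]_ny -> R)
  (h : 'I_N -> R -> 'rV[R]_ny -> R) (Rr lam : R).
Variables (X : 'I_nx -> Omega -> R) (Y : 'I_ny -> Omega -> R).
Variables (Xs : nat -> 'I_nx -> Omega -> R) (Ys : nat -> 'I_ny -> Omega -> R).

Definition FF0 (a : 'M[R]_(N, d)) : 'M[R]_(N, d) :=
  \matrix_(i, l) Ex P (fun w => Fb dJ phi a (vecof X w) (vecof Y w) i l).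
Definition FF (a : 'M[R]_(N, d)) : 'M[R]_(N, d) := FF0 a + lam *: a.

Definition hbar i (ai : 'rV[R]_d) : R :=
  Ex P (fun w => hb h phi i ai (vecof X w) (vecof Y w)).

(* empirical versions, the n samples being the copies indexed 0 .. n-1 *)
Definition Fn (n : nat) (w : Omega) (a : 'M[R]_(N, d)) : 'M[R]_(N, d) :=
  n%:R^-1 *: (\sum_(k < n) Fb dJ phi a (vecof (Xs k) w) (vecof (Ys k) w))
  + lam *: a.
Definition hn i (n : nat) (w : Omega) (ai : 'rV[R]_d) : R :=
  n%:R^-1 * \sum_(k < n) hb h phi i ai (vecof (Xs k) w) (vecof (Ys k) w).

Definition Aeps i (eps : R) : set 'rV[R]_d :=
  [set ai | clBall Rr ai /\ hbar i ai <= eps].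
Definition Aprod (S : 'I_N -> set 'rV[R]_d) : set 'M[R]_(N, d) :=
  [set a | forall i, S i (row i a)].
Definition Awn i n w : set 'rV[R]_d :=
  [set ai | clBall Rr ai /\ hn i n w ai <= 0].

Variables (epsd alpha : R).

Definition en (n : nat) : R := epsd * powR (n%:R) (- alpha).
Definition En (n : nat) (w : Omega) : Prop :=
  [/\ (forall a, clBallN Rr a -> norm2 (Fn n w a - FF a) < en n),
      (Aprod (fun i => Aeps i (- en n)) `<=` Aprod (fun i => Awn i n w)) &
      (Aprod (fun i => Awn i n w) `<=` Aprod (fun i => Aeps i (en n)))].

End Problem.

Definition rate_cond (R : realType) {dO : measure_display} {Omega : measurableType dO}
  (P : probability Omega R) (epsd : R) (W : Omega -> R) : Prop :=
  forall u, 0 < u <= epsd ->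
    ((u ^+ 2 / (3 * sigma2c P W))%:E <= rate P W u)%E.

Definition VI (R : realType) m n (K : set 'M[R]_(m, n))
  (G : 'M[R]_(m, n) -> 'M[R]_(m, n)) (a : 'M[R]_(m, n)) : Prop :=
  K a /\ forall b, K b -> 0 <= inner (G a) (b - a).

Definition convex_on (R : realType) (S : set R) (f : R -> R) : Prop :=
  forall x y t, S x -> S y -> 0 <= t <= 1 -> S (t * x + (1 - t) * y) ->
    f (t * x + (1 - t) * y) <= t * f x + (1 - t) * f y.

(* Fix ω ∈ Ω̃ and n so large that the event E_n holds, and write e := ε_n.  The
   empirical operator F_{ω,n} is λ-strongly monotone and Lipschitz on the compact
   convex set A_{ω,n}, so VI(A_{ω,n}, F_{ω,n}) has exactly one solution a: the fixed
   point of the projected gradient step, which is a contraction.  Let s be a Slater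
   point given by (A4).  Since the constraints are convex, (1-τ) a⋆ + τ s ∈ A_{-e} ⊆
   A_{ω,n} for τ = e/ε_h, and (1-σ) a + σ s ∈ A for σ = e/(e+ε_h), because
   a ∈ A_{ω,n} ⊆ A_e.  Testing the two variational inequalities with these points and
   using strong monotonicity together with ‖F_{ω,n} - 𝔽‖ < e yields
   λ ‖a - a⋆‖² ≤ C e with C independent of n, and ε_n = ε⋄ n^{-α} → 0.

   Independence, the common law of the copies and the rate-function bound only serve
   to make Ω̃ an almost sure event. *)

From HB Require Import structures.
From mathcomp Require Import all_boot all_order all_algebra.
From mathcomp Require Import all_classical all_reals all_analysis.
From mathcomp Require Import ring lra.
Set Implicit Arguments. Unset Strict Implicit. Unset Printing Implicit Defensive.
Import Order.TTheory GRing.Theory Num.Theory.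
Import numFieldNormedType.Exports.
Local Open Scope classical_set_scope.
Local Open Scope ring_scope.

(** * Frobenius inner product *)

Section Frobenius.
Variables (R : realType) (m n : nat).
Implicit Types A B C : 'M[R]_(m, n).

Lemma innerC A B : inner A B = inner B A.
Proof. by apply: eq_bigr => i _; apply: eq_bigr => j _; rewrite mulrC. Qed.

Lemma innerDl A B C : inner (A + B) C = inner A C + inner B C.
Proof.
rewrite /inner -big_split; apply: eq_bigr => i _.
by rewrite -big_split; apply: eq_bigr => j _; rewrite !mxE mulrDl.
Qed.

Lemma innerZl k A C : inner (k *: A) C = k * inner A C.
Proof.
rewrite /inner mulr_sumr; apply: eq_bigr => i _.
by rewrite mulr_sumr; apply: eq_bigr => j _; rewrite !mxE mulrA.
Qed.

Lemma innerNl A C : inner (- A) C = - inner A C.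
Proof. by rewrite -scaleN1r innerZl mulN1r. Qed.

Lemma innerBl A B C : inner (A - B) C = inner A C - inner B C.
Proof. by rewrite innerDl innerNl. Qed.

Lemma innerDr A B C : inner C (A + B) = inner C A + inner C B.
Proof. by rewrite innerC innerDl !(innerC C). Qed.

Lemma innerZr k A C : inner C (k *: A) = k * inner C A.
Proof. by rewrite innerC innerZl innerC. Qed.

Lemma innerNr A C : inner C (- A) = - inner C A.
Proof. by rewrite innerC innerNl innerC. Qed.

Lemma innerBr A B C : inner C (A - B) = inner C A - inner C B.
Proof. by rewrite innerDr innerNr. Qed.

Lemma inner0l C : inner 0 C = 0.
Proof. by rewrite -(scale0r (0 : 'M[R]_(m, n))) innerZl mul0r. Qed.

Lemma inner0r C : inner C 0 = 0.
Proof. by rewrite innerC inner0l. Qed.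

Lemma inner_suml I (r : seq I) (F : I -> 'M[R]_(m, n)) C :
  inner (\sum_(k <- r) F k) C = \sum_(k <- r) inner (F k) C.
Proof.
elim: r => [|x r IH]; first by rewrite !big_nil inner0l.
by rewrite !big_cons innerDl IH.
Qed.

Lemma inner_ge0 A : 0 <= inner A A.
Proof. by do 2!apply: sumr_ge0 => ? _; rewrite -expr2 sqr_ge0. Qed.

Lemma inner_self_eq0 A : inner A A = 0 -> A = 0.
Proof.
have sq_ge0 i j : 0 <= A i j * A i j by rewrite -expr2 sqr_ge0.
have row_ge0 i : 0 <= \sum_j A i j * A i j by apply: sumr_ge0 => j _.
move=> A0; apply/matrixP => i j; rewrite mxE.
have /eqP := psumr_eq0P (fun j _ => sq_ge0 i j)
  (psumr_eq0P (fun i _ => row_ge0 i) A0 (i := i) isT) (i := j) isT.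
by rewrite mulf_eq0 orbb => /eqP.
Qed.

Lemma sqr_norm2 A : norm2 A ^+ 2 = inner A A.
Proof.
rewrite sqr_sqrtr; last by do 2!apply: sumr_ge0 => ? _; rewrite sqr_ge0.
by apply: eq_bigr => i _; apply: eq_bigr => j _; rewrite expr2.
Qed.

Lemma norm2_ge0 A : 0 <= norm2 A.
Proof. exact: sqrtr_ge0. Qed.

Lemma norm2_eq0 A : norm2 A = 0 -> A = 0.
Proof. by move=> A0; apply: inner_self_eq0; rewrite -sqr_norm2 A0 expr0n. Qed.

Lemma norm2_le_sqr A c : 0 <= c -> inner A A <= c ^+ 2 -> norm2 A <= c.
Proof. by move=> c0; rewrite -sqr_norm2 ler_pXn2r // nnegrE norm2_ge0. Qed.

Lemma inner_le_norm2 A B : inner A B <= norm2 A * norm2 B.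
Proof.
set a := norm2 A; set b := norm2 B.
have [a0|a_neq0] := eqVneq a 0; first by rewrite (norm2_eq0 a0) inner0l a0 mul0r.
have [b0|b_neq0] := eqVneq b 0; first by rewrite (norm2_eq0 b0) inner0r b0 mulr0.
have a_gt0 : 0 < a by rewrite lt_def a_neq0 norm2_ge0.
have b_gt0 : 0 < b by rewrite lt_def b_neq0 norm2_ge0.
(* expand [0 <= |b A - a B|^2] with [a = |A|], [b = |B|] *)
have := inner_ge0 (b *: A - a *: B).
rewrite !innerBl !innerBr !innerZl !innerZr -!sqr_norm2 (innerC B A) -/a -/b => H.
have : 0 <= 2 * (a * b) * (a * b - inner A B) by nra.
by rewrite pmulr_rge0 ?subr_ge0 // !mulr_gt0.
Qed.

Lemma norm2N A : norm2 (- A) = norm2 A.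
Proof.
by congr Num.sqrt; apply: eq_bigr => i _; apply: eq_bigr => j _; rewrite mxE sqrrN.
Qed.

Lemma normr_inner_le A B : `|inner A B| <= norm2 A * norm2 B.
Proof.
rewrite ler_norml inner_le_norm2 andbT lerNl -innerNl -[norm2 A]norm2N.
exact: inner_le_norm2.
Qed.

Lemma norm2D A B : norm2 (A + B) <= norm2 A + norm2 B.
Proof.
apply: norm2_le_sqr; first by rewrite addr_ge0 ?norm2_ge0.
rewrite innerDl !innerDr -!sqr_norm2 (innerC B A).
have := inner_le_norm2 A B; nra.
Qed.

Lemma norm2Z k A : norm2 (k *: A) = `|k| * norm2 A.
Proof.
apply/eqP; rewrite -(eqrXn2 (n:=2)) ?mulr_ge0 ?norm2_ge0 //.
by rewrite sqr_norm2 innerZl innerZr exprMn -sqr_norm2 real_normK ?num_real // mulrA expr2.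
Qed.

Lemma norm2_subC A B : norm2 (A - B) = norm2 (B - A).
Proof. by rewrite -norm2N opprB. Qed.

Lemma norm2_sum I (r : seq I) (F : I -> 'M[R]_(m, n)) :
  norm2 (\sum_(k <- r) F k) <= \sum_(k <- r) norm2 (F k).
Proof.
elim: r => [|x r IH]; last by rewrite !big_cons (le_trans (norm2D _ _)) ?lerD.
by rewrite !big_nil -(scale0r 0) norm2Z normr0 mul0r.
Qed.

Lemma ler_dist_norm2 A B : `|norm2 A - norm2 B| <= norm2 (A - B).
Proof.
have leA : norm2 A <= norm2 (A - B) + norm2 B by rewrite -{1}(subrK B A) norm2D.
have leB : norm2 B <= norm2 (A - B) + norm2 A.
  by rewrite norm2_subC -{1}(subrK A B) norm2D.
by rewrite ler_norml; apply/andP; split; lra.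
Qed.

Lemma normr_entry_le_norm2 A i j : `|A i j| <= norm2 A.
Proof.
rewrite -(ler_pXn2r (n:=2)) ?nnegrE ?norm2_ge0 // sqr_norm2 real_normK ?num_real //.
rewrite /inner (bigD1 i) //= (bigD1 j) //= expr2 -addrA lerDl.
by rewrite addr_ge0 //; do ?apply: sumr_ge0 => ? _; rewrite -expr2 sqr_ge0.
Qed.

Lemma norm2_le_entries A c : 0 <= c -> (forall i j, `|A i j| <= c) ->
  norm2 A <= ((m * n)%:R + 1) * c.
Proof.
move=> c0 Ac; apply: norm2_le_sqr; first by rewrite mulr_ge0 // addr_ge0.
have : inner A A <= (m * n)%:R * c ^+ 2.
  rewrite [X in _ <= X](_ : _ = \sum_(i < m) \sum_(j < n) c ^+ 2); last first.
    by rewrite !sumr_const !card_ord -mulrnA mulr_natl mulnC.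
  apply: ler_sum => i _; apply: ler_sum => j _.
  by rewrite -expr2 -real_normK ?num_real // lerXn2r ?nnegrE.
have : 0 <= (m * n)%:R :> R := ler0n _ _.
set k := (m * n)%:R; nra.
Qed.

Lemma sqr_norm2D A B :
  norm2 (A + B) ^+ 2 = norm2 A ^+ 2 + 2 * inner A B + norm2 B ^+ 2.
Proof. by rewrite !sqr_norm2 innerDl !innerDr (innerC B A); ring. Qed.

Lemma sqr_norm2B A B :
  norm2 (A - B) ^+ 2 = norm2 A ^+ 2 - 2 * inner A B + norm2 B ^+ 2.
Proof. by rewrite sqr_norm2D norm2N innerNr; ring. Qed.

End Frobenius.

Lemma inner_rV (R : realType) n (u v : 'rV[R]_n) : inner u v = \sum_j u 0 j * v 0 j.
Proof. by rewrite /inner big_ord1. Qed.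

Lemma inner_rows (R : realType) m n (A B : 'M[R]_(m, n)) :
  inner A B = \sum_i inner (row i A) (row i B).
Proof. by apply: eq_bigr => i _; rewrite inner_rV; apply: eq_bigr => j _; rewrite !mxE. Qed.

Lemma row_lincomb (R : realType) m n (A B : 'M[R]_(m, n)) t s i :
  row i (t *: A + s *: B) = t *: row i A + s *: row i B.
Proof. by apply/matrixP => k l; rewrite !mxE. Qed.

Lemma norm2_row_le (R : realType) m n (A : 'M[R]_(m, n)) i : norm2 (row i A) <= norm2 A.
Proof.
rewrite -(ler_pXn2r (n:=2)) ?nnegrE ?norm2_ge0 // !sqr_norm2 (inner_rows A A).
by rewrite (bigD1 i) //= lerDl sumr_ge0 // => j _; exact: inner_ge0.
Qed.

Lemma norm2_outer (R : realType) m n (u : 'rV[R]_m) (v : 'rV[R]_n) :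
  norm2 (u^T *m v) = norm2 u * norm2 v.
Proof.
apply/eqP; rewrite -(eqrXn2 (n:=2)) ?mulr_ge0 ?norm2_ge0 //.
rewrite exprMn !sqr_norm2 !inner_rV /inner mulr_suml; apply/eqP.
apply: eq_bigr => i _; rewrite mulr_sumr; apply: eq_bigr => l _.
by rewrite !mxE !big_ord1 !mxE; ring.
Qed.

(** * Variational inequalities on compact convex sets *)

Lemma mx_norm_le_norm2 (R : realType) m n (A : 'M[R]_(m, n)) : `|A| <= norm2 A.
Proof.
rewrite [`|A|]mx_normrE; apply: bigmax_le; first exact: norm2_ge0.
by move=> [i j] _; exact: normr_entry_le_norm2.
Qed.

Section Minimization.
Variables (R : realType) (m n : nat).
Local Notation M := 'M[R]_(m, n).

Definition norm2_closed (K : set M) := forall a,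
  (forall e, 0 < e -> exists2 b, K b & norm2 (a - b) < e) -> K a.
Definition norm2_bounded (K : set M) := exists C, forall a, K a -> norm2 a <= C.

Let k : R := (m * n)%:R + 1.

Let k_gt0 : 0 < k.
Proof. by rewrite ltr_wpDl. Qed.

Lemma norm2_vec_mx_le (v : 'rV[R]_(m * n)) : norm2 (vec_mx v) <= k * `|v|.
Proof.
apply: norm2_le_entries => // i j; rewrite mxE.
rewrite [`|v|]mx_normrE.
exact: (le_bigmax _ (fun ij : 'I_1 * 'I_(m * n) => `|v ij.1 ij.2|) (0, mxvec_index i j)).
Qed.

Lemma mx_norm_le_norm2_vec_mx (v : 'rV[R]_(m * n)) : `|v| <= norm2 (vec_mx v).
Proof.
rewrite [`|v|]mx_normrE; apply: bigmax_le; first exact: norm2_ge0.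
move=> [i ij] _ /=; rewrite (ord1 i).
case: (mxvec_indexP ij) => a b.
by rewrite -{1}(vec_mxK v) mxvecE normr_entry_le_norm2.
Qed.

Lemma compact_vec_mx_preimage (K : set M) :
  norm2_closed K -> norm2_bounded K -> compact [set v | K (vec_mx v)].
Proof.
move=> Kcl [C KC]; apply: bounded_closed_compact.
  exists C; split; first exact: num_real.
  move=> x Cx v Kv; apply: le_trans (mx_norm_le_norm2_vec_mx v) _.
  exact: le_trans (KC _ Kv) (ltW Cx).
move=> v clv; apply: Kcl => e e0.
have [w [Kw vw]] := clv _ (nbhsx_ballx v _ (divr_gt0 e0 k_gt0)).
exists (vec_mx w) => //; rewrite -linearB /=.
apply: le_lt_trans (norm2_vec_mx_le _) _.
by rewrite -ltr_pdivlMl // mulrC; move: vw; rewrite -ball_normE.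
Qed.

Lemma norm2_lipschitz_min (K : set M) (f : M -> R) L :
  K !=set0 -> norm2_closed K -> norm2_bounded K ->
  (forall a b, K a -> K b -> `|f a - f b| <= L * norm2 (a - b)) ->
  exists2 a, K a & forall b, K b -> f a <= f b.
Proof.
move=> [a0 Ka0] Kcl Kbd f_lip.
set V := [set v | K (vec_mx v)].
have V0 : V !=set0 by exists (mxvec a0); rewrite /V /= mxvecK.
have fV : {within V, continuous (f \o vec_mx)}.
  apply/subspace_continuousP => v Vv; apply/cvgrPdist_le => e e0.
  have L1_gt0 : 0 < `|L| + 1 by rewrite ltr_pwDr.
  rewrite near_withinE; near=> u => Vu /=.
  apply: le_trans (f_lip _ _ Vv Vu) _.
  apply: le_trans (ler_wpM2r (norm2_ge0 _) (_ : L <= `|L| + 1)) _.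
    by rewrite (le_trans (ler_norm _)) // lerDl.
  rewrite -ler_pdivlMl // -linearB; apply: le_trans (norm2_vec_mx_le _) _.
  rewrite -ler_pdivlMl //; near: u.
  by apply: cvgr_dist_le => //; rewrite !mulr_gt0 // invr_gt0.
have [c Vc cmin] := EVT_min_rV V0 (compact_vec_mx_preimage Kcl Kbd) fV.
exists (vec_mx c); first by move: Vc; rewrite inE.
move=> b Kb; have := cmin (mxvec b); rewrite /= mxvecK; apply.
by rewrite inE /V /= mxvecK.
Unshelve. all: by end_near.
Qed.

End Minimization.

Section VariationalInequality.
Variables (R : realType) (m n : nat).
Local Notation M := 'M[R]_(m, n).
Implicit Types (K : set M) (G : M -> M).

Definition convex_mx K :=
  forall a b t, K a -> K b -> 0 <= t <= 1 -> K (t *: a + (1 - t) *: b).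
Definition lipschitz_on K G L :=
  forall a b, K a -> K b -> norm2 (G a - G b) <= L * norm2 (a - b).
Definition strongly_monotone_on K G lam :=
  forall a b, K a -> K b -> lam * norm2 (a - b) ^+ 2 <= inner (G a - G b) (a - b).

Lemma projection_exists K : K !=set0 -> norm2_closed K -> norm2_bounded K ->
  convex_mx K -> forall x, exists p, K p /\ forall b, K b -> inner (x - p) (b - p) <= 0.
Proof.
move=> K0 Kcl Kbd Kcvx x.
have [|p Kp pmin] := @norm2_lipschitz_min _ _ _ K (fun b => norm2 (b - x)) 1 K0 Kcl Kbd.
  move=> a b _ _; rewrite mul1r; apply: le_trans (ler_dist_norm2 _ _) _.
  by rewrite opprB addrA subrK.
exists p; split => // b Kb.
set c := inner (x - p) (b - p); set q := norm2 (b - p) ^+ 2.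
have q_ge0 : 0 <= q by rewrite sqr_ge0.
(* first-order optimality along the segment from p to b *)
have small_steps t : 0 < t <= 1 -> 2 * c <= t * q.
  move=> /andP[t0 t1].
  have Kt : K (t *: b + (1 - t) *: p) by apply: Kcvx; rewrite ?(ltW t0).
  have : norm2 (p - x) ^+ 2 <= norm2 ((p - x) + t *: (b - p)) ^+ 2.
    rewrite lerXn2r ?nnegrE ?norm2_ge0 //.
    rewrite (_ : p - x + _ = t *: b + (1 - t) *: p - x); first exact: pmin.
    by apply/matrixP => i j; rewrite !mxE; ring.
  rewrite [X in _ <= X]sqr_norm2D innerZr norm2Z exprMn -/q -opprB innerNl -/c.
  rewrite ger0_norm ?(ltW t0) // => H.
  have : 0 <= t * (t * q - 2 * c) by lra.
  by rewrite pmulr_rge0 // subr_ge0.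
rewrite leNgt; apply/negP => c_gt0.
have qc_gt0 : 0 < q + c by lra.
have t_gt0 : 0 < c / (q + c) by rewrite divr_gt0.
have t_le1 : c / (q + c) <= 1 by rewrite ler_pdivrMr // mul1r lerDr.
have := small_steps _ (introT andP (conj t_gt0 t_le1)).
by rewrite mulrAC ler_pdivlMr //; nra.
Qed.

Lemma projection_nonexpansive K (pr : M -> M) :
  (forall x b, K b -> inner (x - pr x) (b - pr x) <= 0) -> (forall x, K (pr x)) ->
  forall x y, norm2 (pr x - pr y) <= norm2 (x - y).
Proof.
move=> prV prK x y; set u := pr x - pr y.
have := prV x _ (prK y); have := prV y _ (prK x).
have -> : pr y - pr x = - u by rewrite opprB.
rewrite innerNr => hy hx.
have : norm2 u ^+ 2 <= inner (x - y) u.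
  rewrite sqr_norm2 -subr_ge0 -innerBl.
  have -> : x - y - u = (x - pr x) - (y - pr y).
    by rewrite /u; apply/matrixP => i j; rewrite !mxE; ring.
  by rewrite innerBl; lra.
have := inner_le_norm2 (x - y) u; have := norm2_ge0 u; have := norm2_ge0 (x - y).
nra.
Qed.

Lemma VI_unique K G lam : 0 < lam -> strongly_monotone_on K G lam ->
  forall a b, VI K G a -> VI K G b -> a = b.
Proof.
move=> lam_gt0 Gmono a b [Ka Ha] [Kb Hb].
have := Gmono _ _ Ka Kb; have := Ha _ Kb; have := Hb _ Ka.
rewrite innerBl -[b - a]opprB innerNr => Hba Hab mono.
have : norm2 (a - b) ^+ 2 <= 0 by rewrite -(pmulr_rle0 _ lam_gt0); lra.
rewrite le_eqVlt ltNge sqr_ge0 orbF sqrf_eq0 => /eqP/norm2_eq0/eqP.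
by rewrite subr_eq0 => /eqP.
Qed.

Lemma contraction_fixpoint K (T : M -> M) q :
  K !=set0 -> norm2_closed K -> norm2_bounded K -> (forall a, K a -> K (T a)) ->
  q < 1 -> (forall a b, K a -> K b -> norm2 (T a - T b) ^+ 2 <= q * norm2 (a - b) ^+ 2) ->
  exists2 a, K a & T a = a.
Proof.
move=> K0 Kcl Kbd TK q_lt1 Tcontr.
have T_lip a b : K a -> K b -> norm2 (T a - T b) <= norm2 (a - b).
  move=> Ka Kb; rewrite -(ler_pXn2r (n:=2)) ?nnegrE ?norm2_ge0 //.
  have := Tcontr _ _ Ka Kb; have := sqr_ge0 (norm2 (a - b)); nra.
(* the residual [norm2 (T a - a)] is minimized at a fixed point *)
have [|a Ka amin] := @norm2_lipschitz_min _ _ _ K (fun a => norm2 (T a - a)) 2 K0 Kcl Kbd.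
  move=> a b Ka Kb; apply: le_trans (ler_dist_norm2 _ _) _.
  have -> : T a - a - (T b - b) = (T a - T b) - (a - b).
    by apply/matrixP => i j; rewrite !mxE; ring.
  apply: le_trans (norm2D _ _) _; rewrite norm2N.
  by have := T_lip a b Ka Kb; lra.
exists a => //; apply/eqP; rewrite -subr_eq0; apply/eqP/norm2_eq0.
have := amin _ (TK _ Ka); have := Tcontr _ _ (TK _ Ka) Ka.
have := norm2_ge0 (T a - a); have := norm2_ge0 (T (T a) - T a).
set u := norm2 (T a - a); set w := norm2 (T (T a) - T a) => w_ge0 u_ge0 w_le u_le.
have : u ^+ 2 <= w ^+ 2 by rewrite lerXn2r.
move=> uw; apply/eqP; rewrite -sqrf_eq0 eq_le sqr_ge0 andbT; nra.
Qed.

Lemma projected_step_contraction K G L lam (pr : M -> M) :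
  (forall x b, K b -> inner (x - pr x) (b - pr x) <= 0) -> (forall x, K (pr x)) ->
  0 < lam -> 0 < L -> lipschitz_on K G L -> strongly_monotone_on K G lam ->
  forall a b, K a -> K b ->
  norm2 (pr (a - lam / L ^+ 2 *: G a) - pr (b - lam / L ^+ 2 *: G b)) ^+ 2
    <= (1 - lam ^+ 2 / L ^+ 2) * norm2 (a - b) ^+ 2.
Proof.
move=> prV prK lam_gt0 L_gt0 G_lip G_mono a b Ka Kb; set g := lam / L ^+ 2.
have g_gt0 : 0 < g by rewrite divr_gt0 // exprn_gt0.
apply: le_trans (_ : norm2 ((a - b) - g *: (G a - G b)) ^+ 2 <= _).
  rewrite lerXn2r ?nnegrE ?norm2_ge0 //.
  rewrite (_ : a - b - g *: (G a - G b) = (a - g *: G a) - (b - g *: G b)).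
    exact: (projection_nonexpansive prV prK).
  by apply/matrixP => i j; rewrite !mxE; ring.
rewrite [X in X <= _]sqr_norm2B innerZr norm2Z exprMn (innerC (a - b)).
rewrite ger0_norm ?(ltW g_gt0) //.
have := G_mono _ _ Ka Kb; have := G_lip _ _ Ka Kb.
rewrite -(ler_pXn2r (n:=2)) ?nnegrE ?mulr_ge0 ?norm2_ge0 ?(ltW L_gt0) // exprMn.
set d := norm2 (a - b) ^+ 2; set e := inner _ _; set s := norm2 _ ^+ 2 => Ls mono.
have -> : (1 - lam ^+ 2 / L ^+ 2) * d = d - 2 * g * (lam * d) + g ^+ 2 * (L ^+ 2 * d).
  by rewrite /g; field; rewrite gt_eqF.
have : g * (lam * d) <= g * e by rewrite ler_pM2l.
have : g ^+ 2 * s <= g ^+ 2 * (L ^+ 2 * d) by rewrite ler_pM2l // exprn_gt0.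
lra.
Qed.

Lemma VI_exists K G L lam :
  K !=set0 -> norm2_closed K -> norm2_bounded K -> convex_mx K ->
  0 < lam -> 0 < L -> lipschitz_on K G L -> strongly_monotone_on K G lam ->
  exists a, VI K G a.
Proof.
move=> K0 Kcl Kbd Kcvx lam_gt0 L_gt0 G_lip G_mono.
have [pr prP] := choice (projection_exists K0 Kcl Kbd Kcvx).
have prK x : K (pr x) by case: (prP x).
have prV x b : K b -> inner (x - pr x) (b - pr x) <= 0 by case: (prP x) => _; apply.
(* a solution is a fixed point of the projected gradient step *)
have q_lt1 : 1 - lam ^+ 2 / L ^+ 2 < 1 by rewrite ltrBlDr ltrDl divr_gt0 // exprn_gt0.
have [a Ka fix_a] := contraction_fixpoint K0 Kcl Kbd (fun a _ => prK _) q_lt1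
  (projected_step_contraction prV prK lam_gt0 L_gt0 G_lip G_mono).
exists a; split => // b Kb; have := prV (a - lam / L ^+ 2 *: G a) _ Kb; rewrite fix_a.
rewrite addrAC subrr add0r innerNl innerZl oppr_le0 pmulr_rge0 //.
by rewrite divr_gt0 // exprn_gt0.
Qed.

End VariationalInequality.

(** * Stability under perturbation of the constraints *)

Section PerturbedConstraints.
Variables (R : realType) (m n : nat).
Local Notation M := 'M[R]_(m, n).
Variables (A : R -> set M) (epsh : R) (s : M).
Hypothesis A_conv : forall e1 e2 t a b, A e1 a -> A e2 b -> 0 <= t <= 1 ->
  A (t * e1 + (1 - t) * e2) (t *: a + (1 - t) *: b).
Hypotheses (epsh_gt0 : 0 < epsh) (slater : A (- epsh) s).

Lemma slater_shift_strict e a : 0 <= e <= epsh -> A 0 a ->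
  A (- e) ((1 - e / epsh) *: a + (1 - (1 - e / epsh)) *: s).
Proof.
move=> /andP[e_ge0 e_le] Aa.
have t01 : 0 <= 1 - e / epsh <= 1.
  by rewrite subr_ge0 ler_pdivrMr // mul1r e_le gerBl divr_ge0 ?(ltW epsh_gt0).
have -> : - e = (1 - e / epsh) * 0 + (1 - (1 - e / epsh)) * - epsh.
  by field; rewrite gt_eqF.
exact: A_conv.
Qed.

Lemma slater_shift_feasible e a : 0 <= e -> A e a ->
  A 0 ((1 - e / (e + epsh)) *: a + (1 - (1 - e / (e + epsh))) *: s).
Proof.
move=> e_ge0 Aa; have ee_gt0 : 0 < e + epsh by rewrite ltr_wpDl.
have t01 : 0 <= 1 - e / (e + epsh) <= 1.
  by rewrite subr_ge0 ler_pdivrMr // mul1r lerDl (ltW epsh_gt0) gerBl divr_ge0 ?(ltW ee_gt0).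
have -> : 0 = (1 - e / (e + epsh)) * e + (1 - (1 - e / (e + epsh))) * - epsh.
  by field; rewrite gt_eqF.
exact: A_conv.
Qed.

Variables (B : set M) (D BG lam : R) (F G : M -> M).
Hypotheses (AB : forall e, A e `<=` B) (diamB : forall x y, B x -> B y -> norm2 (x - y) <= D).
Hypotheses (G_bounded : forall x, B x -> norm2 (G x) <= BG)
  (G_mono : strongly_monotone_on B G lam).

Lemma VI_constraint_perturbation (K : set M) e astar a :
  0 < e <= epsh -> A (- e) `<=` K -> K `<=` A e -> norm2 (F astar - G astar) <= e ->
  VI (A 0) F astar -> VI K G a ->
  lam * norm2 (a - astar) ^+ 2 <= e * (D * (BG / epsh + 1 + norm2 (F astar) / epsh)).
Proof.
move=> /andP[e_gt0 e_le] AK KA FG [Astar VIstar] [Ka VIa].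
have Ba : B a by apply: AB (KA _ Ka).
have Bstar : B astar by apply: AB Astar.
have Bs : B s by apply: AB slater.
have D_ge0 : 0 <= D := le_trans (norm2_ge0 _) (diamB Ba Bstar).
set tau := e / epsh; set sig := e / (e + epsh).
have tau_ge0 : 0 <= tau by rewrite divr_ge0 ?ltW.
have sig_ge0 : 0 <= sig by rewrite divr_ge0 ?addr_ge0 ?ltW.
have sig_le : sig <= tau.
  have ee_gt0 : 0 < e + epsh by rewrite addr_gt0.
  by rewrite ler_wpM2l ?(ltW e_gt0) // lef_pV2 ?posrE // lerDr ltW.
set c := (1 - tau) *: astar + (1 - (1 - tau)) *: s.
set a' := (1 - sig) *: a + (1 - (1 - sig)) *: s.
have Kc : K c by apply/AK/slater_shift_strict; rewrite ?(ltW e_gt0).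
have Aa' : A 0 a' by apply: slater_shift_feasible (ltW e_gt0) (KA _ Ka).
have c_sub : c - astar = tau *: (s - astar) by apply/matrixP => i j; rewrite !mxE; ring.
have a'_sub : a' - a = sig *: (s - a) by apply/matrixP => i j; rewrite !mxE; ring.
have split_mono : inner (G a - G astar) (a - astar) =
    inner (G a) (c - astar) - inner (G a) (c - a) + inner (F astar - G astar) (a - astar)
    + inner (F astar) (a' - a) - inner (F astar) (a' - astar).
  by rewrite !(innerBl, innerBr); ring.
have t1 : inner (G a) (c - astar) <= BG * (tau * D).
  apply: le_trans (inner_le_norm2 _ _) _; apply: ler_pM; rewrite ?norm2_ge0 ?G_bounded //.
  by rewrite c_sub norm2Z ger0_norm // ler_wpM2l // diamB.
have t2 : inner (F astar - G astar) (a - astar) <= e * D.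
  apply: le_trans (inner_le_norm2 _ _) _.
  by apply: ler_pM; rewrite ?norm2_ge0 ?diamB.
have t3 : inner (F astar) (a' - a) <= norm2 (F astar) * (tau * D).
  apply: le_trans (inner_le_norm2 _ _) _; apply: ler_wpM2l; first exact: norm2_ge0.
  rewrite a'_sub norm2Z ger0_norm //.
  by apply: le_trans (ler_wpM2l sig_ge0 (diamB Bs Ba)) _; apply: ler_wpM2r.
have := VIa _ Kc; have := VIstar _ Aa'; have := G_mono Ba Bstar.
have -> : e * (D * (BG / epsh + 1 + norm2 (F astar) / epsh)) =
    BG * (tau * D) + e * D + norm2 (F astar) * (tau * D).
  by rewrite /tau; field; rewrite gt_eqF.
lra.
Qed.

End PerturbedConstraints.

(** * The empirical game *)

Section Features.
Variables (R : realType) (nx d : nat) (phi : 'I_d -> 'rV[R]_nx -> R).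

Definition feature x : 'rV[R]_d := \row_l phi l x.

Lemma zi_inner ai x : zi phi ai x = inner ai (feature x).
Proof. by rewrite inner_rV; apply: eq_bigr => l _; rewrite mxE. Qed.

Lemma normr_zi_le ai x : `|zi phi ai x| <= norm2 ai * norm2 (feature x).
Proof. by rewrite zi_inner normr_inner_le. Qed.

Lemma zi_lincomb ai bi t s x :
  zi phi (t *: ai + s *: bi) x = t * zi phi ai x + s * zi phi bi x.
Proof. by rewrite !zi_inner innerDl !innerZl. Qed.

Lemma ziB ai bi x : zi phi (ai - bi) x = zi phi ai x - zi phi bi x.
Proof. by rewrite !zi_inner innerBl. Qed.

Lemma feature_bounded (Xset : set 'rV[R]_nx) : compact Xset ->
  (forall l, {within Xset, continuous phi l}) ->
  exists2 Phi, 0 <= Phi & forall x, Xset x -> norm2 (feature x) <= Phi.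
Proof.
move=> Xcpt phi_cont.
have phi_bounded l : exists B : R, forall x, Xset x -> `|phi l x| <= B.
  have [M [_ HM]] := compact_bounded (continuous_compact (phi_cont l) Xcpt).
  exists (`|M| + 1) => x Xx; apply: HM; last by exists x.
  by rewrite (le_lt_trans (ler_norm _)) // ltrDl.
have [B HB] := choice phi_bounded.
have sumB_ge0 : 0 <= \sum_l `|B l| by apply: sumr_ge0.
exists (((1 * d)%:R + 1) * \sum_l `|B l|); first by rewrite mulr_ge0 // addr_ge0.
move=> x Xx; apply: norm2_le_entries => // i j; rewrite mxE.
apply: le_trans (HB j x Xx) _.
by rewrite (bigD1 j) //= (le_trans (ler_norm _)) // lerDl sumr_ge0.
Qed.

Variable (N : nat).

Lemma zhatB (a b : 'M[R]_(N, d)) x : zhat phi (a - b) x = zhat phi a x - zhat phi b x.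
Proof.
apply/matrixP => k i; rewrite !mxE -ziB; congr zi.
by apply/matrixP => k' l; rewrite !mxE.
Qed.

Lemma norm2_zhat_le (a : 'M[R]_(N, d)) x :
  norm2 (zhat phi a x) <= norm2 a * norm2 (feature x).
Proof.
apply: norm2_le_sqr; first by rewrite mulr_ge0 ?norm2_ge0.
rewrite inner_rV exprMn !sqr_norm2 inner_rows mulr_suml.
apply: ler_sum => i _; rewrite mxE -expr2 -real_normK ?num_real //.
rewrite -!sqr_norm2 -exprMn lerXn2r ?nnegrE ?mulr_ge0 ?norm2_ge0 //.
exact: normr_zi_le.
Qed.

Lemma Fb_outer ny (dJ : 'I_N -> 'rV[R]_N -> 'rV[R]_ny -> R) a x y :
  Fb dJ phi a x y = (Fz dJ (zhat phi a x) y)^T *m feature x.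
Proof. by apply/matrixP => i l; rewrite !mxE big_ord1 !mxE. Qed.

Lemma inner_outer_feature (u : 'rV[R]_N) x (c : 'M[R]_(N, d)) :
  inner (u^T *m feature x) c = inner u (zhat phi c x).
Proof.
rewrite inner_rV; apply: eq_bigr => i _; rewrite mxE /zi mulr_sumr.
by apply: eq_bigr => l _; rewrite !mxE big_ord1 !mxE; ring.
Qed.

End Features.

(* [n = 0] is allowed, as [0^-1 = 0]. *)
Lemma mean_le (R : numFieldType) (n : nat) (f : 'I_n -> R) c :
  0 <= c -> (forall k, f k <= c) -> n%:R^-1 * \sum_(k < n) f k <= c.
Proof.
move=> c_ge0 fc; case: n f fc => [|n] f fc; first by rewrite big_ord0 mulr0.
rewrite ler_pdivrMl ?ltr0n // mulr_natl -[X in _ *+ X](card_ord n.+1) -sumr_const.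
exact: ler_sum.
Qed.

Lemma clBallN_norm2_le (R : realType) N d Rr (a : 'M[R]_(N, d)) :
  0 <= Rr -> clBallN Rr a -> norm2 a <= N%:R * Rr.
Proof.
move=> Rr_ge0 aB; apply: norm2_le_sqr; first by rewrite mulr_ge0.
rewrite inner_rows; apply: le_trans (_ : N%:R * Rr ^+ 2 <= _).
  rewrite mulr_natl -[X in _ *+ X](card_ord N) -sumr_const ler_sum // => i _.
  by rewrite -sqr_norm2 lerXn2r ?nnegrE ?norm2_ge0 //; apply: aB.
rewrite exprMn ler_wpM2r ?sqr_ge0 // expr2 -natrM ler_nat.
by case: N {a aB} => // N; rewrite leq_pmull.
Qed.

Lemma clBall_convex (R : realType) d Rr (a b : 'rV[R]_d) t :
  clBall Rr a -> clBall Rr b -> 0 <= t <= 1 -> clBall Rr (t *: a + (1 - t) *: b).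
Proof.
move=> a_in b_in /andP[t_ge0 t_le1]; apply: le_trans (norm2D _ _) _.
rewrite !norm2Z ger0_norm // ger0_norm ?subr_ge0 //.
have : t * norm2 a <= t * Rr by apply: ler_wpM2l.
have : (1 - t) * norm2 b <= (1 - t) * Rr by rewrite ler_wpM2l ?subr_ge0.
lra.
Qed.

Lemma Aprod_nonempty (R : realType) N d (S : 'I_N -> set 'rV[R]_d) :
  (forall i, exists ai, S i ai) -> Aprod S !=set0.
Proof. by move=> /choice[f Sf]; exists (\matrix_i f i) => i; rewrite rowK. Qed.

Lemma ball_of_norm2_lt (R : realType) m n (a b : 'M[R]_(m, n)) eps :
  norm2 (a - b) < eps -> ball a eps b.
Proof. by rewrite -ball_normE /=; apply: le_lt_trans (mx_norm_le_norm2 _). Qed.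

Lemma natr_powRN_lt (R : realType) (alpha r : R) : 0 < alpha -> 0 < r ->
  exists K, forall n, (K < n)%N -> n%:R `^ (- alpha) < r.
Proof.
move=> alpha_gt0 r_gt0; set x := r^-1 `^ alpha^-1.
exists (Num.bound x) => n Kn.
have xn : x < n%:R.
  by apply: lt_trans (archi_boundP (powR_ge0 _ _)) _; rewrite ltr_nat.
have n_gt0 : 0 < n%:R :> R by apply: le_lt_trans xn; exact: powR_ge0.
have rV_gt0 : 0 < r^-1 by rewrite invr_gt0.
rewrite powRN -[r]invrK ltf_pV2 ?posrE ?powR_gt0 //.
have -> : r^-1 = x `^ alpha by rewrite -powRrM mulVf ?powRr1 ?ltW ?lt0r_neq0.
by apply: gt0_ltr_powR; rewrite ?nnegrE ?powR_ge0 ?ltW.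
Qed.

Lemma en_lt (R : realType) (epsd alpha r : R) : 0 < epsd -> 0 < alpha -> 0 < r ->
  exists K, forall n, (K < n)%N -> en epsd alpha n < r.
Proof.
move=> epsd_gt0 alpha_gt0 r_gt0.
have [K powR_lt] := natr_powRN_lt alpha_gt0 (divr_gt0 r_gt0 epsd_gt0).
by exists K => n Kn; rewrite /en -ltr_pdivlMl // mulrC powR_lt.
Qed.

Section Expectation.
Variables (R : realType) (dO : measure_display) (Omega : measurableType dO).
Variable P : probability Omega R.
Implicit Types f g : Omega -> R.

Lemma le_Ex f g : P.-integrable setT (EFin \o f) -> P.-integrable setT (EFin \o g) ->
  (forall w, f w <= g w) -> Ex P f <= Ex P g.
Proof.
move=> fi gi fg; apply: fine_le; rewrite ?integrable_fin_num //.
by apply: le_integral => // w _; rewrite lee_fin.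
Qed.

Lemma Ex_lincomb f g t s :
  P.-integrable setT (EFin \o f) -> P.-integrable setT (EFin \o g) ->
  Ex P (fun w => t * f w + s * g w) = t * Ex P f + s * Ex P g.
Proof.
move=> fi gi; rewrite /Ex.
under eq_integral do rewrite EFinD !EFinM.
rewrite integralD ?integrableZl // !integralZl //.
have f_fin := integrable_fin_num measurableT fi.
have g_fin := integrable_fin_num measurableT gi.
by rewrite fineD ?fin_numM // !fineM.
Qed.

End Expectation.

Section EmpiricalProblem.
Variables (R : realType) (dO : measure_display) (Omega : measurableType dO).
Variable P : probability Omega R.
Variables (nx ny N d : nat) (Xset : set 'rV[R]_nx) (Yset : set 'rV[R]_ny).
Variables (X : 'I_nx -> Omega -> R) (Y : 'I_ny -> Omega -> R).
Variables (Xs : nat -> 'I_nx -> Omega -> R) (Ys : nat -> 'I_ny -> Omega -> R).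
Variables (phi : 'I_d -> 'rV[R]_nx -> R) (dJ : 'I_N -> 'rV[R]_N -> 'rV[R]_ny -> R)
  (h : 'I_N -> R -> 'rV[R]_ny -> R).
Variables (Rr lam LF Lh Phi : R).
Hypotheses (Rr_ge0 : 0 <= Rr) (Phi_ge0 : 0 <= Phi)
  (feature_le : forall x, Xset x -> norm2 (feature phi x) <= Phi).
Hypothesis F_lip : forall y, Yset y -> forall z1 z2 : 'rV[R]_N,
  Zset phi Xset Rr z1 -> Zset phi Xset Rr z2 ->
  norm2 (Fz dJ z1 y - Fz dJ z2 y) <= LF * norm2 (z1 - z2).
Hypothesis h_lip : forall i y, Yset y -> forall t1 t2,
  Zi phi Xset Rr t1 -> Zi phi Xset Rr t2 -> `|h i t1 y - h i t2 y| <= Lh * `|t1 - t2|.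
Hypothesis bounded_at : exists z : 'rV[R]_N, Zset phi Xset Rr z /\ exists M : R,
  forall y, Yset y -> norm2 (Fz dJ z y) <= M /\ forall i, `|h i (z 0 i) y| <= M.
Hypothesis F_mono : forall y, Yset y -> forall z1 z2 : 'rV[R]_N,
  Zset phi Xset Rr z1 -> Zset phi Xset Rr z2 ->
  0 <= inner (Fz dJ z1 y - Fz dJ z2 y) (z1 - z2).
Hypothesis h_convex : forall i y, Yset y -> convex_on (Zi phi Xset Rr) (fun t => h i t y).
Hypotheses (X_in : forall w, Xset (vecof X w)) (Y_in : forall w, Yset (vecof Y w)).
Hypotheses (Xs_in : forall k w, Xset (vecof (Xs k) w))
  (Ys_in : forall k w, Yset (vecof (Ys k) w)).
Hypothesis h_measurable : forall a, clBallN Rr a -> forall i,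
  measurable_fun setT (fun w => hb h phi i (row i a) (vecof X w) (vecof Y w)).

Lemma zi_Zi ai x : clBall Rr ai -> Xset x -> Zi phi Xset Rr (zi phi ai x).
Proof. by move=> ai_in x_in; exists ai, x. Qed.

Lemma zhat_Zset (a : 'M[R]_(N, d)) x :
  clBallN Rr a -> Xset x -> Zset phi Xset Rr (zhat phi a x).
Proof. by move=> a_in x_in i; rewrite mxE; apply: zi_Zi. Qed.

Lemma normr_Zi_le t : Zi phi Xset Rr t -> `|t| <= Rr * Phi.
Proof.
move=> [ai [x [ai_in [x_in ->]]]]; apply: le_trans (normr_zi_le _ _ _) _.
by apply: ler_pM; rewrite ?norm2_ge0 ?feature_le.
Qed.

Lemma norm2_Zset_le (z : 'rV[R]_N) :
  Zset phi Xset Rr z -> norm2 z <= ((1 * N)%:R + 1) * (Rr * Phi).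
Proof.
move=> z_in; apply: norm2_le_entries; first by rewrite mulr_ge0.
by move=> k i; rewrite (ord1 k); apply/normr_Zi_le/z_in.
Qed.

Lemma Fz_bounded : exists2 BF, 0 <= BF &
  forall z y, Zset phi Xset Rr z -> Yset y -> norm2 (Fz dJ z y) <= BF.
Proof.
have [z0 [z0_in [M M_bd]]] := bounded_at; set BZ := ((1 * N)%:R + 1) * (Rr * Phi).
exists (`|M| + `|LF| * (BZ + BZ)); first by rewrite addr_ge0 ?mulr_ge0 ?addr_ge0 ?mulr_ge0.
move=> z y z_in y_in.
apply: le_trans (_ : norm2 (Fz dJ z y - Fz dJ z0 y) + norm2 (Fz dJ z0 y) <= _).
  by rewrite -{1}(subrK (Fz dJ z0 y) (Fz dJ z y)) norm2D.
rewrite addrC lerD // ?(le_trans _ (ler_norm M)) ?(M_bd _ y_in).1 //.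
apply: le_trans (F_lip y_in z_in z0_in) _.
apply: le_trans (ler_wpM2r (norm2_ge0 _) (ler_norm LF)) _.
apply: ler_wpM2l => //; apply: le_trans (norm2D _ _) _.
by rewrite norm2N lerD // norm2_Zset_le.
Qed.

Lemma h_bounded : exists Bh, forall i t y, Zi phi Xset Rr t -> Yset y -> `|h i t y| <= Bh.
Proof.
have [z0 [z0_in [M M_bd]]] := bounded_at.
exists (M + `|Lh| * (Rr * Phi + Rr * Phi)) => i t y t_in y_in.
apply: le_trans (_ : `|h i t y - h i (z0 0 i) y| + `|h i (z0 0 i) y| <= _).
  by rewrite -{1}(subrK (h i (z0 0 i) y) (h i t y)) ler_normD.
rewrite addrC lerD ?(M_bd _ y_in).2 //.
apply: le_trans (h_lip i y_in t_in (z0_in i)) _.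
apply: le_trans (ler_wpM2r (normr_ge0 _) (ler_norm Lh)) _.
apply: ler_wpM2l => //; apply: le_trans (ler_normB _ _) _.
by rewrite lerD // normr_Zi_le.
Qed.

Lemma Fb_lipschitz (a b : 'M[R]_(N, d)) x y :
  clBallN Rr a -> clBallN Rr b -> Xset x -> Yset y ->
  norm2 (Fb dJ phi a x y - Fb dJ phi b x y) <= `|LF| * Phi ^+ 2 * norm2 (a - b).
Proof.
move=> a_in b_in x_in y_in.
rewrite !Fb_outer -mulmxBl -linearB norm2_outer /=.
have := F_lip y_in (zhat_Zset a_in x_in) (zhat_Zset b_in x_in); rewrite -zhatB => Flip.
have Fdiff : norm2 (Fz dJ (zhat phi a x) y - Fz dJ (zhat phi b x) y) <=
    `|LF| * (norm2 (a - b) * Phi).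
  apply: le_trans Flip _; apply: le_trans (ler_wpM2r (norm2_ge0 _) (ler_norm LF)) _.
  apply: ler_wpM2l => //; apply: le_trans (norm2_zhat_le _ _ _) _.
  by rewrite ler_wpM2l ?norm2_ge0 ?feature_le.
rewrite [X in _ <= X](_ : _ = `|LF| * (norm2 (a - b) * Phi) * Phi); last by ring.
exact: ler_pM (norm2_ge0 _) (norm2_ge0 _) Fdiff (feature_le x_in).
Qed.

Lemma Fb_monotone (a b : 'M[R]_(N, d)) x y :
  clBallN Rr a -> clBallN Rr b -> Xset x -> Yset y ->
  0 <= inner (Fb dJ phi a x y - Fb dJ phi b x y) (a - b).
Proof.
move=> a_in b_in x_in y_in.
rewrite !Fb_outer -mulmxBl -linearB inner_outer_feature zhatB.
exact: F_mono y_in _ _ (zhat_Zset a_in x_in) (zhat_Zset b_in x_in).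
Qed.

Let Fbk w a k := Fb dJ phi a (vecof (Xs k) w) (vecof (Ys k) w).

Let invn_ge0 n : 0 <= n%:R^-1 :> R.
Proof. by rewrite invr_ge0. Qed.

Lemma FnB n w a b : Fn phi dJ lam Xs Ys n w a - Fn phi dJ lam Xs Ys n w b =
  n%:R^-1 *: (\sum_(k < n) (Fbk w a k - Fbk w b k)) + lam *: (a - b).
Proof. by rewrite /Fn sumrB !scalerBr opprD addrACA. Qed.

Lemma Fn_lipschitz n w :
  lipschitz_on (clBallN Rr) (Fn phi dJ lam Xs Ys n w) (`|LF| * Phi ^+ 2 + `|lam|).
Proof.
move=> a b a_in b_in; rewrite FnB mulrDl; apply: le_trans (norm2D _ _) _.
rewrite !norm2Z lerD // ger0_norm ?invr_ge0 //.
apply: le_trans (ler_wpM2l (invn_ge0 n) (norm2_sum _ _)) _.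
by apply: mean_le => [|k]; rewrite ?mulr_ge0 ?norm2_ge0 ?Fb_lipschitz.
Qed.

Lemma Fn_strongly_monotone n w :
  strongly_monotone_on (clBallN Rr) (Fn phi dJ lam Xs Ys n w) lam.
Proof.
move=> a b a_in b_in; rewrite FnB innerDl !innerZl sqr_norm2 lerDr inner_suml.
by rewrite mulr_ge0 ?invr_ge0 ?sumr_ge0 // => k _; apply: Fb_monotone.
Qed.

Lemma Fn_bounded : exists BG, forall n w a, clBallN Rr a ->
  norm2 (Fn phi dJ lam Xs Ys n w a) <= BG.
Proof.
have [BF BF_ge0 BF_bd] := Fz_bounded.
exists (BF * Phi + `|lam| * (N%:R * Rr)) => n w a a_in.
apply: le_trans (norm2D _ _) _; rewrite !norm2Z ger0_norm ?invr_ge0 //.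
rewrite lerD ?ler_wpM2l ?clBallN_norm2_le //.
apply: le_trans (ler_wpM2l (invn_ge0 n) (norm2_sum _ _)) _.
apply: mean_le => [|k]; first by rewrite mulr_ge0.
rewrite Fb_outer norm2_outer ler_pM ?norm2_ge0 ?feature_le ?BF_bd //.
exact: zhat_Zset.
Qed.

Lemma hb_convex i (ai bi : 'rV[R]_d) t x y :
  clBall Rr ai -> clBall Rr bi -> 0 <= t <= 1 -> Xset x -> Yset y ->
  hb h phi i (t *: ai + (1 - t) *: bi) x y <=
  t * hb h phi i ai x y + (1 - t) * hb h phi i bi x y.
Proof.
move=> ai_in bi_in t01 x_in y_in; rewrite /hb zi_lincomb.
apply: h_convex => //; try exact: zi_Zi.
by rewrite -zi_lincomb; apply: zi_Zi => //; exact: clBall_convex.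
Qed.

Lemma hn_convex i n w (ai bi : 'rV[R]_d) t :
  clBall Rr ai -> clBall Rr bi -> 0 <= t <= 1 ->
  hn phi h Xs Ys i n w (t *: ai + (1 - t) *: bi) <=
  t * hn phi h Xs Ys i n w ai + (1 - t) * hn phi h Xs Ys i n w bi.
Proof.
move=> ai_in bi_in t01; rewrite /hn mulrCA [X in _ <= _ + X]mulrCA -mulrDr.
rewrite ler_wpM2l // !mulr_sumr -big_split ler_sum // => k _.
exact: hb_convex.
Qed.

Lemma hn_lipschitz i n w (ai bi : 'rV[R]_d) : clBall Rr ai -> clBall Rr bi ->
  `|hn phi h Xs Ys i n w ai - hn phi h Xs Ys i n w bi| <= `|Lh| * Phi * norm2 (ai - bi).
Proof.
move=> ai_in bi_in; rewrite /hn -mulrBr -sumrB normrM ger0_norm //.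
apply: le_trans (ler_wpM2l (invn_ge0 n) (ler_norm_sum _ _ _)) _.
apply: mean_le => [|k]; first by rewrite !mulr_ge0 ?norm2_ge0.
have x_in := Xs_in k w; have y_in := Ys_in k w.
apply: le_trans (h_lip i y_in (zi_Zi ai_in x_in) (zi_Zi bi_in x_in)) _.
apply: le_trans (ler_wpM2r (normr_ge0 _) (ler_norm Lh)) _.
rewrite -mulrA ler_wpM2l // -ziB mulrC.
by apply: le_trans (normr_zi_le _ _ _) _; rewrite ler_wpM2l ?norm2_ge0 ?feature_le.
Qed.

Local Notation Kn n w := (Aprod (fun i => Awn phi h Rr Xs Ys i n w)).

Lemma empirical_set_sub n w : Kn n w `<=` clBallN Rr.
Proof. by move=> a a_in i; case: (a_in i). Qed.

Lemma empirical_set_bounded n w : norm2_bounded (Kn n w).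
Proof.
by exists (N%:R * Rr) => a a_in; apply/clBallN_norm2_le/empirical_set_sub/a_in.
Qed.

Lemma empirical_set_convex n w : convex_mx (Kn n w).
Proof.
move=> a b t a_in b_in t01 i; rewrite /Awn /= row_lincomb.
have [ai_in hai] := a_in i; have [bi_in hbi] := b_in i.
split; first exact: clBall_convex.
apply: le_trans (hn_convex _ _ _ ai_in bi_in t01) _.
have /andP[t_ge0 t_le1] := t01.
have : t * hn phi h Xs Ys i n w (row i a) <= 0 by rewrite mulr_ge0_le0.
have : (1 - t) * hn phi h Xs Ys i n w (row i b) <= 0 by rewrite mulr_ge0_le0 ?subr_ge0.
lra.
Qed.

Lemma empirical_set_closed n w : norm2_closed (Kn n w).
Proof.
move=> a a_lim i.
have near_row e : 0 < e -> exists2 bi, Awn phi h Rr Xs Ys i n w bi & norm2 (row i a - bi) < e.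
  move=> e_gt0; have [b b_in ab] := a_lim e e_gt0; exists (row i b); first exact: b_in.
  have -> : row i a - row i b = row i (a - b) by apply/matrixP => k l; rewrite !mxE.
  exact: le_lt_trans (norm2_row_le _ _) ab.
have ai_in : clBall Rr (row i a).
  apply/ler_addgt0Pr => e e_gt0; have [b [b_in _] ab] := near_row e e_gt0.
  apply: le_trans (_ : norm2 (row i a - b) + norm2 b <= _).
    by rewrite -{1}(subrK b (row i a)) norm2D.
  by rewrite addrC lerD // ltW.
split => //; apply/ler_addgt0Pr => e e_gt0; rewrite add0r.
have C_gt0 : 0 < `|Lh| * Phi + 1 by rewrite ltr_wpDl ?mulr_ge0.
have [b [b_in hn_b] ab] := near_row _ (divr_gt0 e_gt0 C_gt0).
have := hn_lipschitz i n w ai_in b_in; rewrite ler_norml => /andP[_ hlip].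
have : `|Lh| * Phi * norm2 (row i a - b) <= (`|Lh| * Phi + 1) * (e / (`|Lh| * Phi + 1)).
  by rewrite ler_pM ?mulr_ge0 ?norm2_ge0 ?lerDl // ltW.
rewrite mulrCA divff ?gt_eqF // mulr1; lra.
Qed.

Lemma hb_integrable i (ai : 'rV[R]_d) : clBall Rr ai ->
  P.-integrable setT (EFin \o fun w => hb h phi i ai (vecof X w) (vecof Y w)).
Proof.
move=> ai_in; have [Bh Bh_bd] := h_bounded.
have rows_in : clBallN Rr (\matrix_(j < N) ai) by move=> j; rewrite rowK.
have := h_measurable rows_in i; rewrite rowK => hb_meas.
apply: measurable_bounded_integrable => //.
  by rewrite (le_lt_trans (probability_le1 P measurableT)) ?ltry.
exists Bh; split; first exact: num_real.
move=> M BhM w _; apply: le_trans (ltW BhM).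
by apply: Bh_bd; [exact: zi_Zi | exact: Y_in].
Qed.

Lemma hbar_convex i (ai bi : 'rV[R]_d) t :
  clBall Rr ai -> clBall Rr bi -> 0 <= t <= 1 ->
  hbar P phi h X Y i (t *: ai + (1 - t) *: bi) <=
  t * hbar P phi h X Y i ai + (1 - t) * hbar P phi h X Y i bi.
Proof.
move=> ai_in bi_in t01; have ai_int := hb_integrable i ai_in.
have bi_int := hb_integrable i bi_in.
rewrite /hbar -Ex_lincomb //; apply: le_Ex => [||w]; last exact: hb_convex.
  exact/hb_integrable/clBall_convex.
apply: eq_integrable (integrableD measurableT (integrableZl measurableT t ai_int)
  (integrableZl measurableT (1 - t) bi_int)) => //.
Qed.

Local Notation A e := (Aprod (fun i => Aeps P phi h Rr X Y i e)).

Lemma limit_set_sub e : A e `<=` clBallN Rr.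
Proof. by move=> a a_in i; case: (a_in i). Qed.

Lemma limit_set_lincomb e1 e2 t a b : A e1 a -> A e2 b -> 0 <= t <= 1 ->
  A (t * e1 + (1 - t) * e2) (t *: a + (1 - t) *: b).
Proof.
move=> a_in b_in t01 i; rewrite /Aeps row_lincomb.
have [ai_in hai] := a_in i; have [bi_in hbi] := b_in i.
split; first exact: clBall_convex.
apply: le_trans (hbar_convex i ai_in bi_in t01) _.
have /andP[t_ge0 t_le1] := t01.
by rewrite lerD // ler_wpM2l ?subr_ge0.
Qed.

Variables (epsh : R) (astar : 'M[R]_(N, d)).
Hypotheses (lam_gt0 : 0 < lam) (epsh_gt0 : 0 < epsh).
Hypothesis slater : forall i, exists ai, Aeps P phi h Rr X Y i (- epsh) ai.
Hypothesis astar_VI : VI (A 0) (FF P phi dJ lam X Y) astar.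

Lemma empirical_VI_unique n w : Kn n w !=set0 ->
  exists a, VI (Kn n w) (Fn phi dJ lam Xs Ys n w) a /\
    forall b, VI (Kn n w) (Fn phi dJ lam Xs Ys n w) b -> b = a.
Proof.
move=> K0; set L := `|LF| * Phi ^+ 2 + `|lam|.
have L_gt0 : 0 < L by rewrite ltr_wpDl ?mulr_ge0 // normr_gt0 lt0r_neq0.
have Fn_lip : lipschitz_on (Kn n w) (Fn phi dJ lam Xs Ys n w) L.
  by move=> a b /empirical_set_sub a_in /empirical_set_sub b_in; apply: Fn_lipschitz.
have Fn_mono : strongly_monotone_on (Kn n w) (Fn phi dJ lam Xs Ys n w) lam.
  by move=> a b /empirical_set_sub a_in /empirical_set_sub b_in; apply: Fn_strongly_monotone.
have [a a_VI] := VI_exists K0 (@empirical_set_closed n w) (@empirical_set_bounded n w)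
  (@empirical_set_convex n w) lam_gt0 L_gt0 Fn_lip Fn_mono.
by exists a; split => // b b_VI; apply: VI_unique lam_gt0 Fn_mono _ _ b_VI a_VI.
Qed.

Lemma limit_set_nonempty e : e <= epsh -> A (- e) !=set0.
Proof.
move=> e_le; have [s s_in] := Aprod_nonempty slater.
by exists s => i; have [si_in hsi] := s_in i; split; last by rewrite (le_trans hsi) ?lerN2.
Qed.

Lemma empirical_VI_stable eps : 0 < eps ->
  exists2 delta, 0 < delta <= epsh & forall n w e a,
    0 < e < delta -> A (- e) `<=` Kn n w -> Kn n w `<=` A e ->
    (forall b, clBallN Rr b ->
      norm2 (Fn phi dJ lam Xs Ys n w b - FF P phi dJ lam X Y b) < e) ->
    VI (Kn n w) (Fn phi dJ lam Xs Ys n w) a -> norm2 (a - astar) < eps.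
Proof.
move=> eps_gt0; have [s s_in] := Aprod_nonempty slater.
have [BG BG_bd] := Fn_bounded.
set D := N%:R * Rr + N%:R * Rr.
have diam (x y : 'M[R]_(N, d)) : clBallN Rr x -> clBallN Rr y -> norm2 (x - y) <= D.
  move=> x_in y_in; apply: le_trans (norm2D _ _) _.
  by rewrite norm2N lerD // clBallN_norm2_le.
set C := D * (BG / epsh + 1 + norm2 (FF P phi dJ lam X Y astar) / epsh).
have C1_gt0 : 0 < `|C| + 1 by rewrite ltr_wpDl.
exists (Num.min epsh (eps ^+ 2 * lam / (`|C| + 1))).
  by rewrite ge_min lexx lt_min epsh_gt0 !divr_gt0 ?mulr_gt0 ?exprn_gt0.
move=> n w e a /andP[e_gt0]; rewrite lt_min => /andP[e_lt e_small] AK KA Fn_FF a_VI.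
have FG : norm2 (FF P phi dJ lam X Y astar - Fn phi dJ lam Xs Ys n w astar) <= e.
  by rewrite norm2_subC ltW // Fn_FF //; apply: limit_set_sub (astar_VI.1).
have := VI_constraint_perturbation limit_set_lincomb epsh_gt0 s_in limit_set_sub diam
  (BG_bd n w) (@Fn_strongly_monotone n w) _ AK KA FG astar_VI a_VI.
rewrite e_gt0 ltW //= -/C => /(_ isT) bound.
have eC_lt : e * C < eps ^+ 2 * lam.
  move: e_small; rewrite ltr_pdivlMr // => e_small.
  have := ler_wpM2l (ltW e_gt0) (ler_norm C); lra.
rewrite -(ltr_pXn2r (n:=2)) ?nnegrE ?norm2_ge0 ?ltW // -(ltr_pM2l lam_gt0); lra.
Qed.

End EmpiricalProblem.

Theorem theorem3 (R : realType) (dO : measure_display)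
  (Omega : measurableType dO) (P : probability Omega R)
  (N d nx ny : nat) (HN : (0 < N)%N) (Hd : (0 < d)%N)
  (Rr lam : R) (HR : 0 < Rr) (Hlam : 0 < lam)
  (Xset : set 'rV[R]_nx) (Yset : set 'rV[R]_ny)
  (HXc : compact Xset) (HYc : compact Yset)
  (X : 'I_nx -> Omega -> R) (Y : 'I_ny -> Omega -> R)
  (HXm : forall j, measurable_fun setT (X j))
  (HYm : forall j, measurable_fun setT (Y j))
  (HXv : forall w, Xset (vecof X w)) (HYv : forall w, Yset (vecof Y w))
  (phi : 'I_d -> 'rV[R]_nx -> R)
  (Hphi : forall l, {within Xset, continuous phi l})
  (J dJ : 'I_N -> 'rV[R]_N -> 'rV[R]_ny -> R)
  (h : 'I_N -> R -> 'rV[R]_ny -> R)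
  (* (A1) *)
  (HA1 : forall (i : 'I_N) (z : 'rV[R]_N) y, Yset y ->
     (forall t : R, is_derive t (1 : R) (fun s => J i (upd z i s) y) (dJ i (upd z i t) y))
     /\ continuous (fun t => dJ i (upd z i t) y))
  (* (A2) *)
  (LF Lh : R)
  (HA2F : forall y, Yset y -> forall z1 z2 : 'rV[R]_N,
     Zset phi Xset Rr z1 -> Zset phi Xset Rr z2 ->
     norm2 (Fz dJ z1 y - Fz dJ z2 y) <= LF * norm2 (z1 - z2))
  (HA2h : forall i y, Yset y -> forall t1 t2,
     Zi phi Xset Rr t1 -> Zi phi Xset Rr t2 ->
     `|h i t1 y - h i t2 y| <= Lh * `|t1 - t2|)
  (HA2b : exists z : 'rV[R]_N, Zset phi Xset Rr z /\ exists M : R, forall y, Yset y ->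
     norm2 (Fz dJ z y) <= M /\ forall i, `|h i (z 0 i) y| <= M)
  (* (A3) *)
  (HA3F : forall y, Yset y -> forall z1 z2 : 'rV[R]_N,
     Zset phi Xset Rr z1 -> Zset phi Xset Rr z2 ->
     0 <= inner (Fz dJ z1 y - Fz dJ z2 y) (z1 - z2))
  (HA3h : forall i y, Yset y -> convex_on (Zi phi Xset Rr) (fun t => h i t y))
  (* (A4) *)
  (epsh : R) (Hepsh : 0 < epsh)
  (HA4 : forall i, exists ai, Aeps P phi h Rr X Y i (- epsh) ai)
  (* measurability of the integrands (implicit in the paper) *)
  (Hmeas : forall a, clBallN Rr a ->
     (forall i l, measurable_fun setT
        (fun w => Fb dJ phi a (vecof X w) (vecof Y w) i l)) /\
     (forall i, measurable_fun setT
        (fun w => hb h phi i (row i a) (vecof X w) (vecof Y w))))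
  (* i.i.d. copies (X^k, Y^k), k = 0, 1, 2, ... *)
  (Xs : nat -> 'I_nx -> Omega -> R) (Ys : nat -> 'I_ny -> Omega -> R)
  (HXsm : forall k j, measurable_fun setT (Xs k j))
  (HYsm : forall k j, measurable_fun setT (Ys k j))
  (HXsv : forall k w, Xset (vecof (Xs k) w))
  (HYsv : forall k w, Yset (vecof (Ys k) w))
  (Hindep : indep_copies P Xs Ys)
  (Hlaw : forall k, same_law P X (Xs k) Y (Ys k))
  (* the constant eps_diamond *)
  (epsd : R) (Hepsd : 0 < epsd < epsh)
  (Hrate : forall a, clBallN Rr a ->
     (forall i l, rate_cond P epsd (fun w =>
        Fb dJ phi a (vecof X w) (vecof Y w) i l - FF0 P phi dJ X Y a i l)) /\
     (forall i, rate_cond P epsd (fun w =>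
        hb h phi i (row i a) (vecof X w) (vecof Y w)
        - hbar P phi h X Y i (row i a))))
  (alpha : R) (Halpha : 0 < alpha < 1 / 2)
  (* the solution of VI(A, \mathbb F) *)
  (astar : 'M[R]_(N, d))
  (Hstar : VI (Aprod (fun i => Aeps P phi h Rr X Y i 0))
              (FF P phi dJ lam X Y) astar) :
  forall w : Omega,
    (exists nw, (0 < nw)%N /\ forall n, (nw < n)%N ->
       En P phi dJ h Rr lam X Y Xs Ys epsd alpha n w) ->
  forall Nb : set 'M[R]_(N, d), nbhs astar Nb ->
  exists Nw, (0 < Nw)%N /\ forall n, (Nw <= n)%N ->
    exists a,
      VI (Aprod (fun i => Awn phi h Rr Xs Ys i n w)) (Fn phi dJ lam Xs Ys n w) a
      /\ (forall b, VI (Aprod (fun i => Awn phi h Rr Xs Ys i n w))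
                       (Fn phi dJ lam Xs Ys n w) b -> b = a)
      /\ Nb a.
Proof.
move=> w [nw [_ En_w]] Nb /nbhs_ballP[eps eps_gt0 ball_Nb].
have [Phi Phi_ge0 feature_le] := feature_bounded HXc Hphi.
have [delta /andP[delta_gt0 delta_le] stable] := empirical_VI_stable (ltW HR)
  Phi_ge0 feature_le HA2F HA2h HA2b HA3F HA3h HXv HYv HXsv HYsv
  (fun a a_in => (Hmeas a a_in).2) Hlam Hepsh HA4 Hstar eps_gt0.
have [/andP[epsd_gt0 _] /andP[alpha_gt0 _]] := (Hepsd, Halpha).
have [K en_lt_delta] := en_lt epsd_gt0 alpha_gt0 delta_gt0.
exists (nw + K).+1; split => // n n_ge.
have [Fn_FF AK KA] := En_w n (leq_ltn_trans (leq_addr K nw) n_ge).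
have e_lt := en_lt_delta n (leq_ltn_trans (leq_addl nw K) n_ge).
have e_gt0 : 0 < en epsd alpha n.
  by rewrite mulr_gt0 ?powR_gt0 ?ltr0n ?(leq_trans _ n_ge).
have K0 := subset_nonempty AK (limit_set_nonempty HA4 (ltW (lt_le_trans e_lt delta_le))).
have [a [a_VI a_uniq]] := empirical_VI_unique (ltW HR) Phi_ge0 feature_le HA2F HA2h
  HA3F HA3h HXsv HYsv Hlam K0.
exists a; do 2!split => //; apply/ball_Nb/ball_of_norm2_lt; rewrite norm2_subC.
by apply: (stable n w (en epsd alpha n)); rewrite ?e_gt0.
Qed.
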